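(* (i) For every $n\ge 1$, the chain triangular cactus $T_n$ of length $n$ satisfies $s(T_n)=\lfloor (n-2)/2\rfloor+2$. (ii) For every $n\ge 1$, a chain square cactus $O_n$ of length $n$ satisfies $s(O_n)=n+1$.
   Context: The saturation number $s(G)$ is the minimum cardinality of a maximal matching (a set of pairwise vertex-disjoint edges not properly contained in another such set) of $G$. A cactus is a connected graph in which no edge lies in more than one cycle. A triangular cactus is a cactus all of whose blocks are triangles; a chain triangular cactus of length $n$ is a triangular cactus with $n$ triangles in which each triangle has at most two cut-vertices and each cut-vertex is shared by exactly two triangles (equivalently, triangles $B_1,\dots,B_n$ where $B_i$ and $B_{i+1}$ share exactly one vertex and no other pairs share vertices); it has $2n+1$ vertices and $3n$ edges. A chain square cactus $O_n$ of length $n$ is defined in the same way with every triangle replaced by a $4$-cycle $C_4$ (consecutive $4$-cycles sharing exactly one vertex, each cut-vertex shared by exactly two blocks). *)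

From HB Require Import structures.
From mathcomp Require Import all_boot all_order all_algebra.
Set Implicit Arguments. Unset Strict Implicit. Unset Printing Implicit Defensive.

(* A (simple) graph is given by a finite vertex type V and an adjacency
   relation e : rel V.  Edges are the 2-element sets {x, y} with e x y. *)
Definition edge_set (V : finType) (e : rel V) : {set {set V}} :=
  [set E : {set V} | [exists x, exists y, e x y && (E == [set x; y])]].

Definition is_matching (V : finType) (e : rel V) (M : {set {set V}}) : bool :=
  (M \subset edge_set e) &&
  [forall E1 in M, forall E2 in M, (E1 != E2) ==> [disjoint E1 & E2]].

Definition maximal_matching (V : finType) (e : rel V) (M : {set {set V}}) : bool :=
  is_matching e M &&
  [forall M' : {set {set V}}, (M \proper M') ==> ~~ is_matching e M'].

(* Saturation number s(G): minimum cardinality of a maximal matching.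
   (The default value #|V| is never used since the empty set extends to
   some maximal matching.) *)
Definition sat_num (V : finType) (e : rel V) : nat :=
  \big[minn/#|V|]_(M : {set {set V}} | maximal_matching e M) #|M|.

(* A chain cactus of length n whose blocks are k-cycles: blocks
   B_0,...,B_{n-1}, each given as a duplicate-free cyclic sequence of k
   vertices (the cycle B(0) B(1) ... B(k-1) B(0)); consecutive blocks share
   exactly one vertex, non-consecutive blocks are disjoint, every vertex lies
   in some block, and the edges of the graph are exactly the cycle edges of
   the blocks. *)
Definition chain_cactus (k n : nat) (V : finType) (e : rel V) : Prop :=
  exists B : 'I_n -> k.-tuple V,
  [/\ forall i, uniq (B i),
      forall i j : 'I_n, nat_of_ord j = i.+1 ->
        #|[set x | (x \in (B i : seq V)) && (x \in (B j : seq V))]| = 1,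
      forall i j : 'I_n, i.+1 < j ->
        forall x, ~~ ((x \in (B i : seq V)) && (x \in (B j : seq V))),
      forall x, exists i, x \in (B i : seq V)
    & forall x y, e x y =
        [exists i, (x \in (B i : seq V)) &&
                   ((next (B i) x == y) || (next (B i) y == x))]].

Definition chain_triangular_cactus (n : nat) (V : finType) (e : rel V) : Prop :=
  chain_cactus 3 n e.

Definition chain_square_cactus (n : nat) (V : finType) (e : rel V) : Prop :=
  chain_cactus 4 n e.

From HB Require Import structures.
From mathcomp Require Import all_boot all_order all_algebra.
From mathcomp Require Import zify.
Set Implicit Arguments. Unset Strict Implicit. Unset Printing Implicit Defensive.

(* Every edge of a matching M lies in exactly one block of the chain. For the
   lower bound let t_j say that the cut vertex between blocks j-1 and j is not
   matched inside block j (t_0 = 0, t_n = 1). Maximality puts two matched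
   vertices in every block, so a block carrying no edge of M has its two cut
   vertices matched from the two neighbouring blocks. This gives
   1 + t_(j+1) <= 2 |M_j| + t_j, and for 4-cycles even 1 + t_(j+1) <= |M_j| + t_j,
   since a single edge of a 4-cycle does not dominate the opposite edge.
   Telescoping yields n + 1 <= 2 |M|, resp. n + 1 <= |M|.
   For the upper bound a maximal matching is assembled block by block, deciding
   for each cut vertex which of its two blocks matches it, so that every block
   has at most one vertex that is neither matched nor a cut vertex: in a chain
   of triangles the blocks of even index take the edge joining their cut
   vertices and the others none (up to the ends of the chain); in a chain of
   squares every block matches its left cut vertex with one edge and the last
   block takes a perfect matching. *)

Section Matchings.

Variables (V : finType) (e : rel V).
Implicit Types (M : {set {set V}}) (x y : V).

Lemma matchingP M :
  reflect ((forall E, E \in M -> exists x y, e x y /\ E = [set x; y]) /\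
           (forall E1 E2 x, E1 \in M -> E2 \in M -> x \in E1 -> x \in E2 -> E1 = E2))
          (is_matching e M).
Proof.
apply: (iffP andP) => [[/subsetP sub /forall_inP D]|[edges disj]]; split.
- move=> E /sub; rewrite inE => /existsP[x /existsP[y /andP[exy /eqP ->]]].
  by exists x, y.
- move=> E1 E2 x E1M E2M xE1 xE2; apply: contraTeq isT => neq.
  have /forall_inP/(_ _ E2M) := D _ E1M; rewrite neq /= => /disjointFr/(_ xE1).
  by rewrite xE2.
- apply/subsetP => E /edges [x [y [exy ->]]]; rewrite inE.
  by apply/existsP; exists x; apply/existsP; exists y; rewrite exy eqxx.
- apply/forall_inP => E1 E1M; apply/forall_inP => E2 E2M; apply/implyP => neq.
  rewrite -setI_eq0; apply/eqP/setP => x; rewrite !inE.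
  apply/negbTE/negP => /andP[xE1 xE2].
  by rewrite (disj _ _ _ E1M E2M xE1 xE2) eqxx in neq.
Qed.

Lemma matching1 x y : e x y -> is_matching e [set [set x; y]].
Proof.
move=> exy; apply/matchingP; split => [E|E1 E2 z]; rewrite ?inE.
  by move=> /eqP ->; exists x, y.
by move=> /eqP -> /eqP ->.
Qed.

Lemma matching2 a b c d : e a b -> e c d ->
  a != c -> a != d -> b != c -> b != d -> is_matching e [set [set a; b]; [set c; d]].
Proof.
move=> eab ecd ac ad bc bd; apply/matchingP; split => [E|E1 E2 z].
  by rewrite !inE => /orP[]/eqP->; [exists a, b | exists c, d].
have cross : z \in [set a; b] -> z \in [set c; d] -> False.
  by rewrite !inE => /orP[]/eqP-> /orP[]/eqP zE; move: ac ad bc bd; rewrite zE eqxx.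
by rewrite !inE => /orP[]/eqP-> /orP[]/eqP-> // zE1 zE2; case: cross.
Qed.

Lemma maximal_matching_cover M x y :
  maximal_matching e M -> e x y -> (x \in cover M) || (y \in cover M).
Proof.
case/andP=> /matchingP [edges disj] /forallP maxM exy.
apply: contraT; rewrite negb_or => /andP[xM yM].
have disjxy E z : E \in M -> z \in E -> z \in [set x; y] -> False.
  move=> EM zE; rewrite !inE => /orP[] /eqP zxy; subst z.
    by case/negP: xM; apply/bigcupP; exists E.
  by case/negP: yM; apply/bigcupP; exists E.
have xyM : [set x; y] \notin M.
  by apply: contra xM => xyM; apply/bigcupP; exists [set x; y]; rewrite // !inE eqxx.
have MxyM : M \proper [set x; y] |: M by apply: properUr; rewrite sub1set.
have /negP[] := implyP (maxM _) MxyM.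
apply/matchingP; split => [E|E1 E2 z].
  by rewrite !inE => /orP[/eqP ->|/edges //]; exists x, y.
rewrite !inE => /orP[/eqP->|E1M] /orP[/eqP->|E2M] // zE1 zE2.
- by case: (disjxy _ _ E2M zE2 zE1).
- by case: (disjxy _ _ E1M zE1 zE2).
- exact: disj E1M E2M zE1 zE2.
Qed.

Lemma cover_maximal_matching M :
  is_matching e M -> (forall x y, e x y -> (x \in cover M) || (y \in cover M)) ->
  maximal_matching e M.
Proof.
move=> mM coverM; rewrite /maximal_matching mM; apply/forall_inP => M'.
case/properP => sMM' [E EM' EM]; apply/negP => /matchingP [edges disj].
have Efresh z : z \in E -> z \in cover M -> False.
  move=> zE /bigcupP [E' E'M zE'].
  by rewrite (disj _ _ _ EM' (subsetP sMM' _ E'M) zE zE') E'M in EM.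
have [x [y [exy defE]]] := edges _ EM'.
by case/orP: (coverM _ _ exy); apply: Efresh; rewrite defE !inE eqxx ?orbT.
Qed.

Lemma matching_card_le M : is_matching e M -> #|M| <= #|V|.
Proof.
case/matchingP => edges disj; have trivM : trivIset M.
  apply/trivIsetP => E1 E2 E1M E2M; apply: contraNT; rewrite -setI_eq0.
  by case/set0Pn => x; rewrite inE => /andP[xE1 xE2]; rewrite (disj _ _ _ E1M E2M xE1 xE2).
rewrite (leq_trans _ (max_card (mem (cover M)))) // -(eqP trivM) -sum1_card.
by apply: leq_sum => E /edges [x [y [_ ->]]]; rewrite cards2.
Qed.

Lemma sat_numE m :
  (exists2 M, maximal_matching e M & #|M| <= m) ->
  (forall M, maximal_matching e M -> m <= #|M|) -> sat_num e = m.
Proof.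
case=> M0 maxM0 M0m minM; apply/eqP; rewrite eqn_leq; apply/andP; split.
  apply: leq_trans M0m; rewrite /sat_num.
  have : M0 \in index_enum {set {set V}} by rewrite mem_index_enum.
  elim: (index_enum _) => //= M s IHs; rewrite inE big_cons.
  case/predU1P => [<-|/IHs]; first by rewrite maxM0 geq_minl.
  by case: (maximal_matching e M) => // le; rewrite geq_min le orbT.
have m_le_V : m <= #|V|.
  by apply: leq_trans (minM _ maxM0) (matching_card_le (andP maxM0).1).
by rewrite /sat_num; elim/big_ind: _ => // a b am bm; rewrite leq_min am bm.
Qed.

End Matchings.

Section Cycles.

Variable T : eqType.
Implicit Types (p q : seq T) (x y : T).

Lemma next_nth_uniq p x0 i :
  uniq p -> i.+1 < size p -> next p (nth x0 p i) = nth x0 p i.+1.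
Proof.
case: p => // y q uq iq; have {}iq : i < size q := iq.
by rewrite next_nth mem_nth ?index_uniq ?ltnS 1?ltnW //= (set_nth_default x0).
Qed.

Lemma iter_next_neq p x m :
  uniq p -> x \in p -> 0 < m < size p -> iter m (next p) x != x.
Proof.
move=> up /rot_to [i q pxq] /andP[m_gt0 m_lt].
have uxq : uniq (x :: q) by rewrite -pxq rot_uniq.
have sxq : size (x :: q) = size p by rewrite -pxq size_rot.
have iterE j : j < size p -> iter j (next p) x = nth x (x :: q) j.
  elim: j => // j IHj jp; rewrite iterS -(next_rot i up) pxq IHj ?next_nth_uniq //.
    by rewrite sxq.
  by apply: ltnW.
by rewrite iterE // -[X in _ != X]/(nth x (x :: q) 0) nth_uniq ?sxq //; lia.
Qed.

Lemma next_neq p x : uniq p -> x \in p -> 1 < size p -> next p x != x.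
Proof. by move=> up xp sp; apply: (iter_next_neq (m := 1) up xp); rewrite sp. Qed.

Lemma next_next_neq p x :
  uniq p -> x \in p -> 2 < size p -> next p (next p x) != x.
Proof. by move=> up xp sp; apply: (iter_next_neq (m := 2) up xp); rewrite sp. Qed.

Lemma prev_neq_next p x :
  uniq p -> x \in p -> 2 < size p -> prev p x != next p x.
Proof.
move=> up xp sp; rewrite -{2}(next_prev up x) eq_sym; apply: next_next_neq => //.
by rewrite mem_prev.
Qed.

Lemma triangle_next p x y :
  uniq p -> size p = 3 -> x \in p -> y \in p -> x != y ->
  (next p x == y) || (next p y == x).
Proof.
move=> up sp xp /rot_to [i q pyq] xy.
rewrite -!(next_rot i up) pyq; rewrite -(mem_rot i) pyq in xp.
have := up; rewrite -(rot_uniq i) pyq.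
have := sp; rewrite -(size_rot i) pyq.
case: q {pyq} xp => [|a [|b []]] //= xp _.
rewrite !inE (negbTE xy) /= in xp *; rewrite eqxx => /and3P[/norP[ya yb] ab _].
rewrite eq_sym in ab.
by case/orP: xp => /eqP ->; rewrite eqxx ?orbT // (negbTE ab) eqxx.
Qed.

End Cycles.

Lemma telescope_bound (f t : nat -> nat) m :
  (forall j, j < m -> 1 + t j.+1 <= f j + t j) -> m + t m <= \sum_(0 <= j < m) f j + t 0.
Proof.
elim: m => [|m IHm] step; first by rewrite big_geq.
rewrite big_nat_recr //=; have := IHm (fun j jm => step j (ltnW jm)).
by have := step m (ltnSn m); lia.
Qed.

Lemma card_bigcup_le (T : finType) m (F : 'I_m -> {set T}) :
  #|\bigcup_(i < m) F i| <= \sum_(i < m) #|F i|.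
Proof.
elim/big_ind2: _ => [|A1 s1 A2 s2 le1 le2|//]; first by rewrite cards0.
by apply: leq_trans (leq_card_setU _ _) _; apply: leq_add.
Qed.

Lemma card_ge2 (T : finType) (A : {set T}) a c :
  a != c -> a \in A -> c \in A -> 2 <= #|A|.
Proof.
move=> ac aA cA; have sub : [set a; c] \subset A.
  by apply/subsetP => z; rewrite in_set2 => /orP[]/eqP->.
by rewrite (leq_trans _ (subset_leq_card sub)) // cards2 ac.
Qed.

Lemma card_ge3 (T : finType) (A : {set T}) a c d :
  a != c -> d \notin [set a; c] -> a \in A -> c \in A -> d \in A -> 3 <= #|A|.
Proof.
move=> ac dac aA cA dA; have sub : [set a; c] \proper A.
  apply/properP; split; last by exists d.
  by apply/subsetP => z; rewrite in_set2 => /orP[]/eqP->.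
by rewrite (leq_trans _ (proper_card sub)) // cards2 ac.
Qed.

Lemma sum_even_indicator m : \sum_(i < m) (~~ odd i : nat) = uphalf m.
Proof.
elim: m => [|m IHm]; first by rewrite big_ord0.
by rewrite big_ord_recr /= IHm uphalf_half; case: (odd m); rewrite /= ?addn0 ?addn1.
Qed.

Lemma sum_triangle_bound m : 0 < m ->
  \sum_(i < m) (if odd i then (i.+1 == m : nat) else 1) = m./2 + 1.
Proof.
case: m => // m _; rewrite big_ord_recr /= eqxx.
rewrite (eq_bigr (fun i : 'I_m => (~~ odd i : nat))) => [|i _]; last first.
  by rewrite /= eqSS (ltn_eqF (ltn_ord i)); case: (odd i).
by rewrite sum_even_indicator; case: (odd m).
Qed.

Lemma sum_square_bound m : 0 < m -> \sum_(i < m) (1 + (i.+1 == m)) = m.+1.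
Proof.
case: m => // m _; rewrite big_split /= sum1_card card_ord big_ord_recr /= eqxx.
by rewrite big1 => [|i _]; rewrite ?eqSS ?(ltn_eqF (ltn_ord i)) // add0n addn1.
Qed.

(* The body of [chain_cactus], so that [chain_cactus k n e] unfolds to
   [exists B, chain_blocks e B]. *)
Definition chain_blocks k n (V : finType) (e : rel V) (B : 'I_n -> k.-tuple V) :=
  [/\ forall i, uniq (B i),
      forall i j : 'I_n, nat_of_ord j = i.+1 ->
        #|[set x | (x \in (B i : seq V)) && (x \in (B j : seq V))]| = 1,
      forall i j : 'I_n, i.+1 < j ->
        forall x, ~~ ((x \in (B i : seq V)) && (x \in (B j : seq V))),
      forall x, exists i, x \in (B i : seq V)
    & forall x y, e x y =
        [exists i, (x \in (B i : seq V)) &&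
                   ((next (B i) x == y) || (next (B i) y == x))]].

Section ChainBlocks.

Variables (k n : nat) (V : finType) (e : rel V) (B : 'I_n -> k.-tuple V).
Hypotheses (chainB : chain_blocks e B) (k_gt2 : 2 < k).
Implicit Types (x y : V) (i : 'I_n) (j : nat).

Let B_uniq i : uniq (B i). Proof. by case: chainB. Qed.
Let k_gt0 : 0 < k. Proof. exact: ltnW (ltnW k_gt2). Qed.

(* Indexed by [nat]: [block j] is empty for [j >= n]. *)
Definition block j : {set V} :=
  [set x | [exists i : 'I_n, (i == j :> nat) && (x \in (B i : seq V))]].

Lemma mem_block i x : (x \in block i) = (x \in (B i : seq V)).
Proof.
rewrite inE; apply/existsP/idP => [[i' /andP[/eqP/val_inj -> //]]|xi].
by exists i; rewrite eqxx.
Qed.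

Lemma blockP j x :
  reflect (exists2 i : 'I_n, i = j :> nat & x \in (B i : seq V)) (x \in block j).
Proof.
rewrite inE; apply: (iffP existsP) => [[i /andP[/eqP <-]]|[i <-]]; first by exists i.
by exists i; rewrite eqxx.
Qed.

Lemma block_ltn j x : x \in block j -> j < n.
Proof. by case/blockP => i <-. Qed.

Lemma card_block i : #|block i| = k.
Proof.
have -> : block i = [set x in (B i : seq V)] by apply/setP => x; rewrite mem_block inE.
by rewrite cardsE (card_uniqP (B_uniq i)) size_tuple.
Qed.

Lemma blocks_adjacent x j j' : x \in block j -> x \in block j' ->
  [\/ j = j', j' = j.+1 | j = j'.+1].
Proof.
case/blockP=> i <- xi /blockP[i' <- xi']; case: chainB => _ _ apart _ _.
have [lt|] := ltnP i.+1 i'; first by have := apart _ _ lt x; rewrite xi xi'.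
have [lt' _|] := ltnP i'.+1 i; first by have := apart _ _ lt' x; rewrite xi xi'.
move=> ii' i'i; have : (i : nat) = i' \/ (i' : nat) = i.+1 \/ (i : nat) = i'.+1 by lia.
by case=> [->|[->|->]]; [constructor 1|constructor 2|constructor 3].
Qed.

Lemma shared_vertex_uniq x y j :
  x \in block j -> x \in block j.+1 -> y \in block j -> y \in block j.+1 -> x = y.
Proof.
case/blockP=> i <- xi /blockP[i' ii' xi']; rewrite mem_block => yi.
rewrite -ii' mem_block => yi'; case: chainB => _ meet _ _ _.
have /eqP/cards1P[z Ez] := meet _ _ ii'.
have xz : x \in [set z] by rewrite -Ez inE xi xi'.
have yz : y \in [set z] by rewrite -Ez inE yi yi'.
by rewrite !inE in xz yz; rewrite (eqP xz) (eqP yz).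
Qed.

Lemma shared_vertex_exists j : j.+1 < n ->
  exists x, (x \in block j) && (x \in block j.+1).
Proof.
move=> jn; have jn' := ltnW jn; case: chainB => _ meet _ _ _.
have /eqP/cards1P[z Ez] := meet (Ordinal jn') (Ordinal jn) erefl.
have : z \in [set z] by rewrite inE.
rewrite -Ez inE => /andP[z1 z2]; exists z.
by rewrite (mem_block (Ordinal jn')) z1 (mem_block (Ordinal jn)).
Qed.

Lemma common_block_uniq x y j j' : x != y ->
  x \in block j -> y \in block j -> x \in block j' -> y \in block j' -> j = j'.
Proof.
move=> xy xj yj xj' yj'; case: (blocks_adjacent xj xj') => // jj'; subst.
  by rewrite (shared_vertex_uniq xj xj' yj yj') eqxx in xy.
by rewrite (shared_vertex_uniq xj' xj yj' yj) eqxx in xy.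
Qed.

Lemma edge_next i x : x \in (B i : seq V) -> e x (next (B i) x).
Proof. by case: chainB => _ _ _ _ -> xi; apply/existsP; exists i; rewrite xi eqxx. Qed.

Lemma edgeP x y : e x y -> exists i,
  [/\ x \in block i, y \in block i & (next (B i) x == y) || (next (B i) y == x)].
Proof.
case: chainB => _ _ _ _ -> /existsP[i /andP[xi nxy]]; exists i.
have yi : y \in (B i : seq V).
  case/orP: nxy => /eqP nxy; first by rewrite -nxy mem_next.
  by rewrite -mem_next nxy.
by rewrite !mem_block xi yi.
Qed.

Lemma edge_neq x y : e x y -> x != y.
Proof.
have B_size i : 1 < size (B i) by rewrite size_tuple ltnW.
case/edgeP=> i [xi yi /orP[]/eqP <-]; rewrite mem_block in xi; rewrite mem_block in yi.
  by rewrite eq_sym next_neq.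
by rewrite next_neq.
Qed.

Lemma edge_prev i x : x \in (B i : seq V) -> e x (prev (B i) x).
Proof.
case: chainB => _ _ _ _ -> xi; apply/existsP; exists i.
by rewrite xi next_prev // eqxx orbT.
Qed.

Lemma edge_sym x y : e x y = e y x.
Proof.
suff sym u v : e u v -> e v u by apply/idP/idP; apply: sym.
case/edgeP=> i [ui vi /orP[]/eqP<-]; rewrite mem_block in ui; rewrite mem_block in vi.
  by rewrite -{2}(prev_next (B_uniq i) u); apply: edge_prev; rewrite mem_next.
exact: edge_next.
Qed.

Lemma edge_at_avoiding i c d : c \in block i -> d \in block i -> c != d ->
  exists a, [/\ e c a, a \in block i & d \notin [set c; a]].
Proof.
rewrite !mem_block => ci di cd; have Bsize : 2 < size (B i) by rewrite size_tuple.
have [ncd|ncd] := eqVneq (next (B i) c) d; last first.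
  exists (next (B i) c).
  by rewrite edge_next ?mem_block ?mem_next // !inE !negb_or eq_sym cd eq_sym.
exists (prev (B i) c); rewrite edge_prev ?mem_block ?mem_prev // !inE !negb_or eq_sym cd -ncd.
by rewrite eq_sym prev_neq_next.
Qed.

Lemma edge_avoiding i d : d \in block i ->
  exists a c, [/\ e a c, a \in block i, c \in block i & d \notin [set a; c]].
Proof.
move=> di; have ndi : next (B i) d \in block i by rewrite !mem_block mem_next in di *.
have [|c [eac ci dac]] := edge_at_avoiding ndi di.
  by rewrite mem_block in di; rewrite next_neq // size_tuple ltnW.
by exists (next (B i) d), c.
Qed.

Lemma triangle_edge i c d : k = 3 -> c \in block i -> d \in block i -> c != d -> e c d.
Proof.
rewrite !mem_block => k3 ci di cd.
case/orP: (triangle_next (B_uniq i) (etrans (size_tuple _) k3) ci di cd) => /eqP<-.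
  exact: edge_next.
by rewrite edge_sym; apply: edge_next.
Qed.

Lemma square_edge_avoiding i x y : k = 4 -> e x y -> x \in block i -> y \in block i ->
  exists a b, [/\ e a b, a \in block i, b \in block i,
                  a \notin [set x; y] & b \notin [set x; y]].
Proof.
move=> k4 exy xi yi; have [i' [xi' yi' nxy]] := edgeP exy.
have ii' : i' = i by apply/val_inj/(common_block_uniq (edge_neq exy) xi' yi' xi yi).
subst i.
suff avoid u v : u \in block i' -> next (B i') u = v -> exists a b,
    [/\ e a b, a \in block i', b \in block i', a \notin [set u; v] & b \notin [set u; v]].
  case/orP: nxy => /eqP; first exact: avoid.
  by move/(avoid _ _ yi); rewrite setUC.
rewrite mem_block => ui <-; have sB : size (B i') = 4 by rewrite size_tuple.
have neq m w : w \in (B i' : seq V) -> 0 < m < 4 -> iter m (next (B i')) w != w.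
  by move=> wi; rewrite -sB; apply: iter_next_neq.
have nui := etrans (mem_next _ u) ui; have nnui := etrans (mem_next _ _) nui.
exists (next (B i') (next (B i') u)), (next (B i') (next (B i') (next (B i') u))).
rewrite !mem_block !mem_next ui edge_next ?mem_next //= !in_set2 !negb_or.
by rewrite (neq 2 u) // (neq 1) // (neq 3 u) // (neq 2 (next (B i') u)).
Qed.

Section LowerBound.

Variable M : {set {set V}}.
Hypothesis maxM : maximal_matching e M.
Let matchM : is_matching e M. Proof. by case/andP: maxM. Qed.

Definition edges_in j := [set E in M | E \subset block j].

(* Since [block j.-1 :&: block j] is the cut vertex, [left_free j] says that it
   is not matched inside block [j]. *)
Definition left_free j :=
  (0 < j) && ((n <= j) || [disjoint cover (edges_in j) & block j.-1]).

Lemma edges_in_sub j : cover (edges_in j) \subset block j.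
Proof. by apply/bigcupsP => E; rewrite inE => /andP[]. Qed.

Lemma edge_in_block E : E \in M -> exists i, E \in edges_in i.
Proof.
case/matchingP: matchM => edges _ EM; have [x [y [exy defE]]] := edges _ EM.
have [i [xi yi _]] := edgeP exy; exists i; rewrite inE EM defE /=.
by apply/subsetP => z; rewrite in_set2 => /orP[]/eqP->.
Qed.

Lemma edges_in_uniq E j j' : E \in edges_in j -> E \in edges_in j' -> j = j'.
Proof.
rewrite !inE => /andP[EM /subsetP Ej] /andP[_ /subsetP Ej'].
case/matchingP: matchM => edges _; have [x [y [exy defE]]] := edges _ EM.
have xE : x \in E by rewrite defE !inE eqxx.
have yE : y \in E by rewrite defE !inE eqxx orbT.
exact: common_block_uniq (edge_neq exy) (Ej _ xE) (Ej _ yE) (Ej' _ xE) (Ej' _ yE).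
Qed.

Lemma card_edges_in : #|M| = \sum_(i < n) #|edges_in i|.
Proof.
have -> : \sum_(i < n) #|edges_in i| = \sum_(i < n) \sum_(E in M) (E \in edges_in i : nat).
  apply: eq_bigr => i _; rewrite -sum1_card [LHS]big_mkcond [RHS]big_mkcond /=.
  by apply: eq_bigr => E _; rewrite inE; case: (E \in M); case: (_ \subset _).
rewrite exchange_big /= -sum1_card; apply: eq_bigr => E EM.
have [i0 Ei0] := edge_in_block EM; rewrite (bigD1 i0) //= Ei0 big1 // => i ii0.
apply/eqP; rewrite eqb0; apply: contra ii0 => Ei.
by apply/eqP/val_inj/(edges_in_uniq Ei Ei0).
Qed.

Lemma matched_nearby x j : x \in block j -> x \in cover M ->
  [\/ x \in cover (edges_in j),
      [/\ 0 < j, x \in block j.-1 & x \in cover (edges_in j.-1)]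
    | x \in block j.+1 /\ x \in cover (edges_in j.+1)].
Proof.
move=> xj /bigcupP[E EM xE]; have [i Ei] := edge_in_block EM.
have xEi : x \in cover (edges_in i) by apply/bigcupP; exists E.
have xi := subsetP (edges_in_sub i) _ xEi.
case: (blocks_adjacent xj xi) => ji; first by constructor 1; rewrite ji.
  by constructor 3; rewrite -ji.
by constructor 2; rewrite ji.
Qed.

Lemma two_matched_vertices i : exists u v,
  [/\ u != v, u \in block i, v \in block i, u \in cover M & v \in cover M].
Proof.
have Bsize : 2 < size (B i) by rewrite size_tuple.
have matched_step x : x \in (B i : seq V) -> exists a,
    [/\ a \in (B i : seq V), a \in cover M & (a == next (B i) x) || (a == x)].
  move=> xi; case/orP: (maximal_matching_cover maxM (edge_next xi)) => xM.
    by exists x; rewrite xi xM eqxx orbT.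
  by exists (next (B i) x); rewrite mem_next xi xM eqxx.
have [a [ai aM _]] := matched_step _ (mem_tnth (Ordinal k_gt0) (B i)).
have [b [bi bM bnext]] := matched_step _ (etrans (mem_next _ a) ai).
exists a, b; rewrite !mem_block ai bi aM bM; split=> //.
by case/orP: bnext => /eqP->; rewrite eq_sym ?next_next_neq ?next_neq ?mem_next // ltnW.
Qed.

Lemma left_free_no_edges i :
  edges_in i = set0 -> left_free i && ~~ left_free i.+1.
Proof.
move=> Ei0; have [u [v [uv ui vi uM vM]]] := two_matched_vertices i.
have aside z : z \in block i -> z \in cover M ->
    (0 < i /\ z \in block i.-1) \/ (z \in block i.+1 /\ z \in cover (edges_in i.+1)).
  move=> zi zM; case: (matched_nearby zi zM) => [|[? ? _]|]; [|by left|by right].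
  by rewrite Ei0 /cover big_set0 inE.
have conclude z : 0 < i -> z \in block i -> z \in block i.+1 ->
    z \in cover (edges_in i.+1) -> left_free i && ~~ left_free i.+1.
  move=> i_gt0 zi zi1 zE; rewrite /left_free i_gt0 Ei0 /cover big_set0 -setI_eq0 set0I eqxx orbT /=.
  rewrite negb_or -ltnNge (block_ltn zi1) /=; apply/negP => /disjointFr/(_ zE).
  by rewrite /= zi.
have [[i_gt0 ul]|[ur uE]] := aside u ui uM; have [[i_gt0' vl]|[vr vE]] := aside v vi vM.
- have predK : i.-1.+1 = i by rewrite prednK.
  by rewrite -predK in ui vi; rewrite (shared_vertex_uniq ul ui vl vi) eqxx in uv.
- exact: conclude vr vE.
- exact: conclude ur uE.
- by rewrite (shared_vertex_uniq ui ur vi vr) eqxx in uv.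
Qed.

Lemma left_free_step i : 1 + left_free i.+1 <= 2 * #|edges_in i| + left_free i.
Proof.
case Ei: #|edges_in i| => [|m]; last by case: (left_free _); case: (left_free _); lia.
by move/eqP: Ei; rewrite cards_eq0 => /eqP/left_free_no_edges/andP[-> /negbTE->].
Qed.

Lemma left_free_step_square i :
  k = 4 -> 1 + left_free i.+1 <= #|edges_in i| + left_free i.
Proof.
move=> k4; case Ei: #|edges_in i| => [|[|m]]; last by case: (left_free _); case: (left_free _); lia.
  by move/eqP: Ei; rewrite cards_eq0 => /eqP/left_free_no_edges/andP[-> /negbTE->].
case lf1 : (left_free i.+1); last by case: (left_free i).
case lf : (left_free i) => //; exfalso.
have [E defEi] := cards1P (introT eqP Ei).
have coverEi : cover (edges_in i) = E by rewrite defEi cover1.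
have : E \in edges_in i by rewrite defEi inE.
rewrite inE => /andP[EM Ei_sub].
case/matchingP: matchM => edges _; have [x [y [exy defE]]] := edges _ EM.
have xi : x \in block i by apply: (subsetP Ei_sub); rewrite defE !inE eqxx.
have yi : y \in block i by apply: (subsetP Ei_sub); rewrite defE !inE eqxx orbT.
have only_E z : z \in block i -> z \in cover M -> z \in E.
  move=> zi zM; case: (matched_nearby zi zM) => [|[i_gt0 zl _]|[zr zE]].
  - by rewrite coverEi.
  - move: lf; rewrite /left_free i_gt0 leqNgt ltn_ord coverEi /= => /negbT.
    case/pred0Pn => w /andP[wE wl]; have wi := subsetP Ei_sub _ wE.
    have predK : i.-1.+1 = i by rewrite prednK.
    by rewrite -predK in zi wi; rewrite (shared_vertex_uniq zl zi wl wi).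
  - move: lf1; rewrite /left_free /= leqNgt (block_ltn zr) /=.
    by move/disjointFr/(_ zE); rewrite zi.
have [a [b [eab ai bi ax bx]]] := square_edge_avoiding k4 exy xi yi.
by case/orP: (maximal_matching_cover maxM eab) => [/(only_E _ ai)|/(only_E _ bi)];
  rewrite defE ?(negbTE ax) ?(negbTE bx).
Qed.

Let left_free_ends : 0 < n -> left_free 0 = false /\ left_free n.
Proof. by move=> n_gt0; rewrite /left_free n_gt0 leqnn. Qed.

Lemma matching_lower_bound : 0 < n -> n.+1 <= 2 * #|M|.
Proof.
move=> /left_free_ends[lf0 lfn]; rewrite card_edges_in big_distrr /=.
have := telescope_bound (f := fun j => 2 * #|edges_in j|) (t := left_free) (m := n).
rewrite lf0 lfn addn0 addn1 big_mkord; apply=> j jn; exact: (left_free_step (Ordinal jn)).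
Qed.

Lemma matching_lower_bound_square : k = 4 -> 0 < n -> n.+1 <= #|M|.
Proof.
move=> k4 /left_free_ends[lf0 lfn]; rewrite card_edges_in.
have := telescope_bound (f := fun j => #|edges_in j|) (t := left_free) (m := n).
rewrite lf0 lfn addn0 addn1 big_mkord; apply=> j jn; exact: (left_free_step_square (Ordinal jn) k4).
Qed.

End LowerBound.

Section UpperBound.

Variable x0 : V.

(* The vertex shared by blocks [j.-1] and [j] when [0 < j < n]; [x0] is junk. *)
Definition cut j := odflt x0 [pick x in block j.-1 :&: block j].

Lemma cutP j : 0 < j < n -> cut j \in block j.-1 /\ cut j \in block j.
Proof.
case/andP=> j_gt0 jn; rewrite /cut; case: pickP => [x|none] /=; first by rewrite inE => /andP.
have jn' : j.-1.+1 < n by rewrite prednK.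
have [x /andP[xl xj]] := shared_vertex_exists jn'.
by have := none x; rewrite inE xl; rewrite prednK // in xj; rewrite xj.
Qed.

Lemma cut_left i : 0 < i -> cut i \in block i.
Proof. by move=> i_gt0; apply: (proj2 (cutP _)); rewrite i_gt0 /=. Qed.

Lemma cut_right i : i.+1 < n -> cut i.+1 \in block i.
Proof. by move=> iN; case: (cutP (j := i.+1)). Qed.

Lemma cut_neq i : 0 < i -> i.+1 < n -> cut i != cut i.+1.
Proof.
move=> i_gt0 iN; apply/eqP => cc.
have [cl _] : cut i \in block i.-1 /\ cut i \in block i by apply: cutP; rewrite i_gt0 ltn_ord.
have [_ cr] := cutP (j := i.+1) iN; rewrite cc in cl.
by case: (blocks_adjacent cl cr); lia.
Qed.

Lemma boundary_anchor i : ~~ ((0 < i) && (i.+1 < n)) ->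
  exists c, [/\ c \in block i, 0 < i -> c = cut i & i.+1 < n -> c = cut i.+1].
Proof.
case: (posnP i) => [i0 _|i_gt0 /= iN]; last by exists (cut i); rewrite cut_left // (negbTE iN).
case: (ltnP i.+1 n) => [iN|iN]; first by exists (cut i.+1); rewrite cut_right // i0.
exists (tnth (B i) (Ordinal k_gt0)).
by rewrite mem_block mem_tnth; split=> //; rewrite ?i0 // ltnNge iN.
Qed.

Definition cuts i : {set V} :=
  [set x | ((0 < i) && (x == cut i)) || ((i.+1 < n) && (x == cut i.+1))].

(* [rho j] tells whether the cut vertex between blocks [j.-1] and [j] is matched
   inside block [j] or inside block [j.-1]. *)
Record block_part (rho : nat -> bool) (b : nat -> nat) i (G : {set {set V}}) : Prop :=
  BlockPart {
    part_matching : is_matching e G;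
    part_sub : cover G \subset block i;
    part_card : #|G| <= b i;
    part_left : 0 < i -> (cut i \in cover G) = rho i;
    part_right : i.+1 < n -> (cut i.+1 \in cover G) = ~~ rho i.+1;
    part_dense : k.-1 <= #|cover G :|: cuts i| }.

Lemma single_edge_part (rho : nat -> bool) (b : nat -> nat) i a c :
  e a c -> a \in block i -> c \in block i -> 0 < b i ->
  (0 < i -> (cut i \in [set a; c]) = rho i) ->
  (i.+1 < n -> (cut i.+1 \in [set a; c]) = ~~ rho i.+1) ->
  k.-1 <= #|[set a; c] :|: cuts i| -> block_part rho b i [set [set a; c]].
Proof.
move=> eac ai ci b_gt0; constructor; rewrite ?cover1 ?cards1 //; first exact: matching1.
by apply/subsetP => z; rewrite in_set2 => /orP[]/eqP->.
Qed.

Section Glue.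

Variables (rho : nat -> bool) (b : nat -> nat) (G : 'I_n -> {set {set V}}).
Hypothesis partG : forall i, block_part rho b i (G i).

Lemma cover_parts i x : x \in cover (G i) -> x \in cover (\bigcup_(i < n) G i).
Proof.
by case/bigcupP => E EG xE; apply/bigcupP; exists E => //; apply/bigcupP; exists i.
Qed.

Lemma cut_covered j : 0 < j < n -> cut j \in cover (\bigcup_(i < n) G i).
Proof.
case/andP=> j_gt0 jn; case rhoj: (rho j).
  by have := part_left (partG (Ordinal jn)) j_gt0; rewrite rhoj; apply: cover_parts.
have jn' : j.-1 < n by rewrite (leq_ltn_trans (leq_pred j)).
apply: (@cover_parts (Ordinal jn')); have := part_right (partG (Ordinal jn')).
by rewrite /= prednK // rhoj => ->.
Qed.

Lemma parts_matching : is_matching e (\bigcup_(i < n) G i).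
Proof.
have cover_block i x : x \in cover (G i) -> x \in block i.
  exact: subsetP (part_sub (partG i)) x.
have conflict (i i' : 'I_n) x :
    i' = i.+1 :> nat -> x \in cover (G i) -> x \in cover (G i') -> False.
  move=> ii' xGi xGi'; have iN : i.+1 < n by rewrite -ii'.
  have [cl cr] := cutP (j := i.+1) iN.
  have xi' := cover_block _ _ xGi'; rewrite ii' in xi'.
  have xc := shared_vertex_uniq (cover_block _ _ xGi) xi' cl cr.
  have := part_right (partG i) iN; have := part_left (partG i').
  by rewrite ii' -xc xGi xGi' => /(_ isT) <-.
apply/matchingP; split.
  by move=> E /bigcupP[i _ EG]; case/matchingP: (part_matching (partG i)) => edges _; apply: edges.
move=> E1 E2 x /bigcupP[i1 _ E1G] /bigcupP[i2 _ E2G] xE1 xE2.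
have xG1 : x \in cover (G i1) by apply/bigcupP; exists E1.
have xG2 : x \in cover (G i2) by apply/bigcupP; exists E2.
case: (blocks_adjacent (cover_block _ _ xG1) (cover_block _ _ xG2)) => i12.
- rewrite (val_inj i12) in E1G.
  by case/matchingP: (part_matching (partG i2)) => _ disj; apply: disj E1G E2G xE1 xE2.
- by case: (conflict _ _ _ i12 xG1 xG2).
- by case: (conflict _ _ _ i12 xG2 xG1).
Qed.

Lemma parts_maximal : maximal_matching e (\bigcup_(i < n) G i).
Proof.
apply: (cover_maximal_matching parts_matching) => x y exy.
apply: contraT; rewrite negb_or => /andP[xM yM].
have [i [xi yi _]] := edgeP exy.
have sub : cover (G i) :|: cuts i \subset block i :\ x :\ y.
  apply/subsetP => z zGc; have [zM zi] : z \in cover (\bigcup_(i < n) G i) /\ z \in block i.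
    case/setUP: zGc => [zG|]; first by rewrite (cover_parts zG) (subsetP (part_sub (partG i))).
    by rewrite inE => /orP[]/andP[nz /eqP->]; rewrite cut_covered ?cut_left ?cut_right ?nz ?ltn_ord.
  by rewrite !in_setD1 zi (memPn yM) ?(memPn xM).
have := leq_trans (part_dense (partG i)) (subset_leq_card sub).
have := cardsD1 x (block i); have := cardsD1 y (block i :\ x).
rewrite card_block xi !in_setD1 yi eq_sym (edge_neq exy).
lia.
Qed.

End Glue.

Lemma glue_parts (rho : nat -> bool) (b : nat -> nat) :
  (forall i, exists G, block_part rho b i G) ->
  exists2 M, maximal_matching e M & #|M| <= \sum_(i < n) b i.
Proof.
case/fin_all_exists => G partG; exists (\bigcup_(i < n) G i); first exact: parts_maximal.
by apply: leq_trans (card_bigcup_le _) _; apply: leq_sum => i _; apply: part_card.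
Qed.

Lemma triangle_part i : k = 3 ->
  exists G, block_part (fun j => ~~ odd j) (fun j => if odd j then (j.+1 == n : nat) else 1) i G.
Proof.
move=> k3; have k_pred : k.-1 = 2 by rewrite k3.
have [odd_i|even_i] := boolP (odd i).
  have i_gt0 : 0 < i by case: (nat_of_ord i) odd_i.
  have [iN|iN] := ltnP i.+1 n.
    exists set0; constructor; rewrite /cover ?big_set0 ?cards0 ?inE ?odd_i ?sub0set //.
    - by apply/matchingP; split=> [E|E1 E2 x]; rewrite inE.
    - by rewrite /= odd_i.
    - rewrite set0U k_pred; apply: (card_ge2 (cut_neq i_gt0 iN));
      by rewrite inE ?i_gt0 ?iN eqxx ?orbT.
  have [a [c [eac ai ci cac]]] := edge_avoiding (cut_left i_gt0).
  apply: ex_intro (single_edge_part eac ai ci _ _ _ _); rewrite ?odd_i ?(negbTE cac) //=.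
  - by rewrite eqn_leq iN ltn_ord.
  - by rewrite ltnNge iN.
  - by rewrite k_pred; apply: (card_ge2 (edge_neq eac)); rewrite !inE eqxx ?orbT.
have [/andP[i_gt0 iN]|boundary] := boolP ((0 < i) && (i.+1 < n)).
  have ecd := triangle_edge k3 (cut_left i_gt0) (cut_right iN) (cut_neq i_gt0 iN).
  apply: ex_intro (single_edge_part ecd (cut_left i_gt0) (cut_right iN) _ _ _ _);
    rewrite /= ?(negbTE even_i) ?even_i ?inE ?eqxx ?orbT //.
  by rewrite k_pred; apply: (card_ge2 (edge_neq ecd)); rewrite !inE eqxx ?orbT.
have [c [ci c_left c_right]] := boundary_anchor boundary.
have ci' : c \in (B i : seq V) by rewrite -mem_block.
have ecn := edge_next ci'.
apply: ex_intro (single_edge_part ecn ci _ _ _ _ _); rewrite ?mem_block ?mem_next // /=.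
- by rewrite (negbTE even_i).
- by move=> /c_left <-; rewrite even_i !inE eqxx.
- by move=> /c_right <-; rewrite even_i !inE eqxx.
- by rewrite k_pred; apply: (card_ge2 (edge_neq ecn)); rewrite !inE eqxx ?orbT.
Qed.

Lemma square_part i : k = 4 ->
  exists G, block_part (fun _ => true) (fun j => 1 + (j.+1 == n)) i G.
Proof.
move=> k4; have k_pred : k.-1 = 3 by rewrite k4.
have [iN|iN] := ltnP i.+1 n.
  have di := cut_right iN; have dc : cut i.+1 \in cuts i by rewrite inE iN eqxx orbT.
  have [i0|i_gt0] := posnP i.
    have [a [c [eac ai ci dac]]] := edge_avoiding di.
    apply: ex_intro (single_edge_part eac ai ci _ _ _ _); rewrite ?(negbTE dac) ?i0 // k_pred.
    by apply: (card_ge3 (edge_neq eac) dac); rewrite in_setU ?dc ?orbT // in_set2 eqxx ?orbT.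
  have [a [eca ai dca]] := edge_at_avoiding (cut_left i_gt0) di (cut_neq i_gt0 iN).
  apply: ex_intro (single_edge_part eca (cut_left i_gt0) ai _ _ _ _);
    rewrite ?(negbTE dca) ?inE ?eqxx // k_pred.
  by apply: (card_ge3 (edge_neq eca) dca); rewrite in_setU ?dc ?orbT // in_set2 eqxx ?orbT.
have boundary : ~~ ((0 < i) && (i.+1 < n)) by rewrite [_ < n]ltnNge iN andbF.
have [c [ci c_left _]] := boundary_anchor boundary; rewrite mem_block in ci.
have Bsize : size (B i) = 4 by rewrite size_tuple.
pose nx m := iter m (next (B i)) c.
have nxi m : nx m \in (B i : seq V) by elim: m => //= m; rewrite mem_next.
have nx_neq m m' : 0 < m' < 4 -> nx (m' + m) != nx m.
  by rewrite /nx iterD -Bsize; apply: iter_next_neq (B_uniq i) (nxi m).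
have enx m : e (nx m) (nx m.+1) by apply: edge_next.
have coverG : cover [set [set nx 0; nx 1]; [set nx 2; nx 3]] =
    [set nx 0; nx 1] :|: [set nx 2; nx 3] by rewrite /cover bigcup_setU !big_set1.
exists [set [set nx 0; nx 1]; [set nx 2; nx 3]]; constructor; rewrite ?coverG.
- apply: matching2 => //; rewrite eq_sym ?(nx_neq 0 2) ?(nx_neq 0 3) ?(nx_neq 1 1) ?(nx_neq 1 2) //.
- by apply/subsetP => z; rewrite in_setU !in_set2 mem_block => /orP[]/orP[]/eqP->.
- by rewrite cards2 eqn_leq iN ltn_ord; case: (_ != _).
- by move=> /c_left <-; rewrite in_setU in_set2 eqxx.
- by rewrite ltnNge iN.
rewrite k_pred; apply: (card_ge3 (a := nx 0) (c := nx 1) (d := nx 2));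
  rewrite ?inE ?eqxx ?orbT //; first by rewrite eq_sym (nx_neq 0 1).
by rewrite negb_or (nx_neq 0 2) // (nx_neq 1 1).
Qed.

End UpperBound.

Lemma triangle_upper_bound : k = 3 -> 0 < n ->
  exists2 M, maximal_matching e M & #|M| <= n./2 + 1.
Proof.
move=> k3 n_gt0; have x0 := tnth (B (Ordinal n_gt0)) (Ordinal k_gt0).
by rewrite -sum_triangle_bound //; exact: glue_parts (fun i => triangle_part x0 i k3).
Qed.

Lemma square_upper_bound : k = 4 -> 0 < n ->
  exists2 M, maximal_matching e M & #|M| <= n.+1.
Proof.
move=> k4 n_gt0; have x0 := tnth (B (Ordinal n_gt0)) (Ordinal k_gt0).
by rewrite -sum_square_bound //; exact: glue_parts (fun i => square_part x0 i k4).
Qed.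

End ChainBlocks.

Lemma sat_num_chain_triangle n (V : finType) (e : rel V) :
  0 < n -> chain_triangular_cactus n e -> sat_num e = n./2 + 1.
Proof.
move=> n_gt0 [B chainB]; apply: sat_numE; first exact: triangle_upper_bound chainB _ _ n_gt0.
move=> M maxM; have := matching_lower_bound chainB isT maxM n_gt0.
by have := odd_double_half n; case: (odd n) => /=; lia.
Qed.

Lemma sat_num_chain_square n (V : finType) (e : rel V) :
  0 < n -> chain_square_cactus n e -> sat_num e = n.+1.
Proof.
move=> n_gt0 [B chainB]; apply: sat_numE; first exact: square_upper_bound chainB _ _ n_gt0.
by move=> M maxM; exact: (matching_lower_bound_square chainB isT maxM erefl n_gt0).
Qed.

Local Open Scope ring_scope.

Theorem theorem3p3 :
  (forall (n : nat) (V : finType) (e : rel V), (1 <= n)%N ->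
     chain_triangular_cactus n e ->
     (sat_num e)%:Z = ((n%:Z - 2) %/ 2)%Z + 2) /\
  (forall (n : nat) (V : finType) (e : rel V), (1 <= n)%N ->
     chain_square_cactus n e ->
     sat_num e = n.+1).
Proof.
split=> [n V e n_gt0 /(sat_num_chain_triangle n_gt0) ->|]; last exact: sat_num_chain_square.
case: n n_gt0 => [|[|m]] // _.
have -> : m.+2%:Z - 2 = m%:Z by rewrite -[m.+2]addn2 PoszD GRing.addrK.
by rewrite divz_nat divn2 /=; lia.
Qed.
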